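(* Consider the nonlinear discrete-time system $x^+=f(x,u)$ with the optimal control problem $\mathscr{P}(x_k)$, its reduced-order version $\widehat{\mathscr{P}}(x_k,\tilde{\mathbf{w}}_k)$ and the active-subspace NMPC scheme (Algorithm 1), all as described in the context below, and let Assumption 1 (A1–A3 below) hold. If for some $k\in\mathbb{N}_0$ the reduced problem $\widehat{\mathscr{P}}(x_k,\tilde{\mathbf{w}}_k)$ is feasible, i.e., there exists $(\mathbf{v}_k,\mu_k)\in\mathbb{R}^q\times\mathbb{R}$ such that $\mathbf{u}_k=T_1\mathbf{v}_k+\mu_kT_2\tilde{\mathbf{w}}_k$ satisfies the constraints of $\widehat{\mathscr{P}}(x_k,\tilde{\mathbf{w}}_k)$, then $\widehat{\mathscr{P}}(x_{k+1},\tilde{\mathbf{w}}_{k+1})$ is also feasible.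
   Context: System: $x^+=f(x,u)$, $x(0)=x_0$, with continuous $f:\mathbb{X}\times\mathbb{U}\to\mathbb{X}$, $\mathbb{X}\subseteq\mathbb{R}^n$, $\mathbb{U}\subseteq\mathbb{R}^m$ closed sets containing the origin in their interior, and $(0,0)$ an equilibrium. Nominal setting: the closed-loop state evolves exactly as the model, $x_{k+1}=f(x_k,u_{k|k})$. Optimal control problem with horizon $N\in\mathbb{N}$: $\mathscr{P}(x_k)$ is to minimize $\sum_{i=0}^{N-1}\ell(x_{k+i|k},u_{k+i|k})+V_f(x_{k+N|k})$ over $\mathbf{u}_k=[u_{k|k}^\top,\dots,u_{k+N-1|k}^\top]^\top$ subject to $x_{k|k}=x_k$, $x_{k+i+1|k}=f(x_{k+i|k},u_{k+i|k})$, $u_{k+i|k}\in\mathbb{U}$, $x_{k+i|k}\in\mathbb{X}$ for $i=0,\dots,N-1$, and $x_{k+N|k}\in\mathbb{X}_f$ (terminal set). Here $\ell$ and $V_f$ are continuous. Eliminating the states, this is written as $\min_{\mathbf{u}_k}J(x_k,\mathbf{u}_k)$ s.t. $g(x_k,\mathbf{u}_k)\le 0$, where $g\le 0$ collects all input, state and terminal constraints. $\hat{\mathbb{X}}_0$ denotes the set of initial states for which $\mathscr{P}$ is feasible, $V(x)$ its optimal value, and $\mathbb{X}_{\mathrm{ini}}\subseteq\hat{\mathbb{X}}_0$ a compact set containing the origin in its interior. Assumption 1: (A1) there is $\alpha\in\mathcal{K}_\infty$ with $\ell(x,u)\ge\alpha(\|x\|)$ for all $(x,u)\in\mathbb{X}\times\mathbb{U}$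 and $\ell(0,0)=0$; (A2) there is a feedback $\kappa:\mathbb{X}_f\to\mathbb{U}$ such that for all $x\in\mathbb{X}_f$, $f(x,\kappa(x))\in\mathbb{X}_f$, $V_f(0)=0$ and $V_f(f(x,\kappa(x)))-V_f(x)\le-\ell(x,\kappa(x))$; (A3) there is $\beta\in\mathcal{K}_\infty$ with $V(x)\le\beta(\|x\|)$ for all $x\in\mathbb{X}_{\mathrm{ini}}$. Subspaces: $T=[T_1\ T_2]\in\mathbb{R}^{Nm\times Nm}$ is an arbitrary orthonormal matrix, $T_1\in\mathbb{R}^{Nm\times q}$ (active subspace), $T_2\in\mathbb{R}^{Nm\times(Nm-q)}$ (inactive subspace). Reduced problem: $\widehat{\mathscr{P}}(x_k,\tilde{\mathbf{w}}_k)$ is to minimize $J(x_k,T_1\mathbf{v}_k+\mu_kT_2\tilde{\mathbf{w}}_k)$ over $(\mathbf{v}_k,\mu_k)\in\mathbb{R}^q\times\mathbb{R}$ subject to $g(x_k,T_1\mathbf{v}_k+\mu_kT_2\tilde{\mathbf{w}}_k)\le 0$, where $\tilde{\mathbf{w}}_k$ is a given parameter. Algorithm 1 (active-subspace NMPC): at $k=0$ solve $\mathscr{P}(x_0)$ for a feasible $\tilde{\mathbf{u}}_0$ and set $\tilde{\mathbf{w}}_0=T_2^\top\tilde{\mathbf{u}}_0$. At each $k$: solve $\widehat{\mathscr{P}}(x_k,\tilde{\mathbf{w}}_k)$ for $(\mathbf{v}_k^\star,\mu_k^\star)$; if $J(x_k,T_1\mathbf{v}_k^\star+\mu_k^\star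 T_2\tilde{\mathbf{w}}_k)\le J(x_k,\tilde{\mathbf{u}}_k)$ set $\mathbf{u}_k=T_1\mathbf{v}_k^\star+\mu_k^\star T_2\tilde{\mathbf{w}}_k$, else $\mathbf{u}_k=\tilde{\mathbf{u}}_k$; apply the first element $u_{k|k}$ of $\mathbf{u}_k$; form the next guess by shifting, $\tilde{\mathbf{u}}_{k+1}=[u_{k+1|k}^\top,\dots,u_{k+N-1|k}^\top,\kappa(x_{k+N|k})^\top]^\top$ (with $x_{k+i|k}$ the states predicted from $x_k$ under $\mathbf{u}_k$), and set $\tilde{\mathbf{w}}_{k+1}=T_2^\top\tilde{\mathbf{u}}_{k+1}$. *)

From HB Require Import structures.
From mathcomp Require Import all_boot all_order all_algebra.
From mathcomp Require Import all_classical all_reals all_analysis.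
Set Implicit Arguments. Unset Strict Implicit. Unset Printing Implicit Defensive.
Import Order.TTheory GRing.Theory Num.Theory numFieldNormedType.Exports.
Local Open Scope ring_scope.
Local Open Scope classical_set_scope.

Section NMPC.
Variable R : realType.

Definition enorm (n : nat) (x : 'cV[R]_n) : R :=
  Num.sqrt (\sum_(i < n) x i 0 ^+ 2).

Definition K_infty (a : R -> R) : Prop :=
  {within [set t : R | 0 <= t], continuous a} /\ a 0 = 0 /\
  (forall s t : R, 0 <= s -> s < t -> a s < a t) /\
  (forall M : R, exists t : R, 0 <= t /\ M < a t).

Variables (n m N : nat).

(* i-th input block u_{k+i|k} of a stacked input vector in R^{Nm} *)
Definition ublk (u : 'cV[R]_(N * m)) (i : nat) : 'cV[R]_m :=
  match @insub nat (fun j => j < N)%N _ i with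
  | Some o => \col_(j < m) u (mxvec_index (o : 'I_N) j) 0
  | None => 0
  end.

Definition ustack (b : nat -> 'cV[R]_m) : 'cV[R]_(N * m) :=
  (mxvec (\matrix_(i < N, j < m) b i j 0))^T.

Variable f : 'cV[R]_n -> 'cV[R]_m -> 'cV[R]_n.

Fixpoint xpred (x : 'cV[R]_n) (u : 'cV[R]_(N * m)) (i : nat) : 'cV[R]_n :=
  match i with
  | O => x
  | S i' => f (xpred x u i') (ublk u i')
  end.

Variables (X : set 'cV[R]_n) (U : set 'cV[R]_m) (Xf : set 'cV[R]_n).
Variables (ell : 'cV[R]_n -> 'cV[R]_m -> R) (Vf : 'cV[R]_n -> R).

Definition feasible (x : 'cV[R]_n) (u : 'cV[R]_(N * m)) : Prop :=
  (forall i : nat, (i < N)%N -> X (xpred x u i) /\ U (ublk u i)) /\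
  Xf (xpred x u N).

Definition Jcost (x : 'cV[R]_n) (u : 'cV[R]_(N * m)) : R :=
  \sum_(i < N) ell (xpred x u i) (ublk u i) + Vf (xpred x u N).

Definition Vopt (x : 'cV[R]_n) : \bar R :=
  ereal_inf [set (Jcost x u)%:E | u in [set u | feasible x u]].

Definition hatX0 : set 'cV[R]_n := [set x | exists u, feasible x u].

Variables (q r : nat) (T1 : 'M[R]_(N * m, q)) (T2 : 'M[R]_(N * m, r)).

Definition ured (v : 'cV[R]_q) (mu : R) (w : 'cV[R]_r) : 'cV[R]_(N * m) :=
  T1 *m v + mu *: (T2 *m w).

Definition red_feasible (x : 'cV[R]_n) (w : 'cV[R]_r) : Prop :=
  exists (v : 'cV[R]_q) (mu : R), feasible x (ured v mu w).

Definition red_optimal (x : 'cV[R]_n) (w : 'cV[R]_r) (v : 'cV[R]_q) (mu : R) :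
  Prop :=
  feasible x (ured v mu w) /\
  forall (v' : 'cV[R]_q) (mu' : R), feasible x (ured v' mu' w) ->
    Jcost x (ured v mu w) <= Jcost x (ured v' mu' w).

Variable kappa : 'cV[R]_n -> 'cV[R]_m.

Definition ushift (x : 'cV[R]_n) (u : 'cV[R]_(N * m)) : 'cV[R]_(N * m) :=
  ustack (fun i => if (i.+1 < N)%N then ublk u i.+1 else kappa (xpred x u N)).

Definition usel (x : 'cV[R]_n) (ut : 'cV[R]_(N * m)) (v : 'cV[R]_q) (mu : R)
  : 'cV[R]_(N * m) :=
  if Jcost x (ured v mu (T2^T *m ut)) <= Jcost x ut
  then ured v mu (T2^T *m ut) else ut.

(* one run of Algorithm 1 through time k: x j, ut j (= tilde u_j),
   (vs j, mus j) the solution of hatP(x_j, tilde w_j) *)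
Definition alg1_run (x : nat -> 'cV[R]_n) (ut : nat -> 'cV[R]_(N * m))
  (vs : nat -> 'cV[R]_q) (mus : nat -> R) (k : nat) : Prop :=
  feasible (x 0%N) (ut 0%N) /\
  forall j : nat, (j <= k)%N ->
    red_optimal (x j) (T2^T *m ut j) (vs j) (mus j) /\
    x j.+1 = f (x j) (ublk (usel (x j) (ut j) (vs j) (mus j)) 0) /\
    ut j.+1 = ushift (x j) (usel (x j) (ut j) (vs j) (mus j)).

End NMPC.

From HB Require Import structures.
From mathcomp Require Import all_boot all_order all_algebra.
From mathcomp Require Import all_classical all_reals all_analysis.
Set Implicit Arguments.
Unset Strict Implicit.
Unset Printing Implicit Defensive.

Import Order.TTheory GRing.Theory Num.Theory numFieldNormedType.Exports.
Local Open Scope ring_scope.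
Local Open Scope classical_set_scope.

(* The shifted warm start of Algorithm 1 is feasible for P(x_{k+1}) whenever
   the input applied at time k is feasible for P(x_k): its first N-1 blocks
   repeat the tail of that input, and the terminal feedback kappa keeps the
   last predicted state in Xf.  The applied input is either the old warm start
   or a feasible point of the reduced problem, so by induction every warm start
   is feasible.  Finally, since T = [T1 T2] is orthonormal, every input u is
   recovered in the reduced problem with parameter T2^T u by the choice
   v = T1^T u and mu = 1. *)

Lemma orthonormal_resolution_identity (R : comUnitRingType) p q r
    (T1 : 'M[R]_(p, q)) (T2 : 'M[R]_(p, r)) :
  (q + r = p)%N -> (row_mx T1 T2)^T *m row_mx T1 T2 = 1%:M ->
  T1 *m T1^T + T2 *m T2^T = 1%:M.
Proof.
move=> Eqr; subst p => /mulmx1C.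
by rewrite tr_row_mx mul_row_col.
Qed.

Section WarmStart.

Variables (R : realType) (n m : nat).
Variable f : 'cV[R]_n -> 'cV[R]_m -> 'cV[R]_n.
Variable kappa : 'cV[R]_n -> 'cV[R]_m.

Lemma ublk_ustack N (b : nat -> 'cV[R]_m) i :
  (i < N)%N -> ublk (ustack N b) i = b i.
Proof.
move=> ltiN; rewrite /ublk insubT /=.
by apply/matrixP => j k; rewrite !mxE (ord1 k) mxvecE mxE.
Qed.

Lemma xpred_ushift N x (u : 'cV[R]_(N * m)) i : (i < N)%N ->
  xpred f (f x (ublk u 0)) (ushift f kappa x u) i = xpred f x u i.+1.
Proof.
elim: i => [|i IHi] ltiN //=.
by rewrite IHi ?ublk_ustack ?ltiN ?(ltnW ltiN).
Qed.

Variables (X Xf : set 'cV[R]_n).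
Variable U : set 'cV[R]_m.
Hypothesis XfX : Xf `<=` X.
Hypothesis kappa_invariant : forall x, Xf x -> U (kappa x) /\ Xf (f x (kappa x)).

Lemma feasible_ushift N x (u : 'cV[R]_(N * m)) : (0 < N)%N ->
  feasible f X U Xf x u ->
  feasible f X U Xf (f x (ublk u 0)) (ushift f kappa x u).
Proof.
move=> N_gt0 [feas_stage feas_term]; split.
  move=> i ltiN; rewrite xpred_ushift // ublk_ustack //.
  case: ltnP => [/feas_stage // | leNi1].
  have -> : i.+1 = N by apply/eqP; rewrite eqn_leq leNi1 ltiN.
  by split; [apply: XfX | apply: (kappa_invariant feas_term).1].
case: N u N_gt0 feas_stage feas_term => // N' u _ _ feas_term.
rewrite [xpred _ _ _ _]/= xpred_ushift // ublk_ustack // ltnn.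
exact: (kappa_invariant feas_term).2.
Qed.

End WarmStart.

Section ActiveSubspaceNMPC.

Variables (R : realType) (n m N q r : nat).
Variable f : 'cV[R]_n -> 'cV[R]_m -> 'cV[R]_n.
Variables (X Xf : set 'cV[R]_n) (U : set 'cV[R]_m).
Variables (ell : 'cV[R]_n -> 'cV[R]_m -> R) (Vf : 'cV[R]_n -> R).
Variable kappa : 'cV[R]_n -> 'cV[R]_m.
Variables (T1 : 'M[R]_(N * m, q)) (T2 : 'M[R]_(N * m, r)).

Lemma ured_proj (u : 'cV[R]_(N * m)) : T1 *m T1^T + T2 *m T2^T = 1%:M ->
  ured T1 T2 (T1^T *m u) 1 (T2^T *m u) = u.
Proof. by move=> T_id; rewrite /ured scale1r !mulmxA -mulmxDl T_id mul1mx. Qed.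

Lemma red_feasible_of_feasible x (u : 'cV[R]_(N * m)) :
  T1 *m T1^T + T2 *m T2^T = 1%:M -> feasible f X U Xf x u ->
  red_feasible f X U Xf T1 T2 x (T2^T *m u).
Proof. by move=> T_id feas_u; exists (T1^T *m u), 1; rewrite ured_proj. Qed.

Lemma feasible_usel x (ut : 'cV[R]_(N * m)) v mu :
  red_optimal f X U Xf ell Vf T1 T2 x (T2^T *m ut) v mu ->
  feasible f X U Xf x ut -> feasible f X U Xf x (usel f ell Vf T1 T2 x ut v mu).
Proof. by move=> [feas_red _] feas_ut; rewrite /usel; case: ifP. Qed.

Hypothesis N_gt0 : (0 < N)%N.
Hypothesis XfX : Xf `<=` X.
Hypothesis kappa_invariant : forall x, Xf x -> U (kappa x) /\ Xf (f x (kappa x)).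

Lemma alg1_run_feasible_warm_start xs ut vs mus k :
  alg1_run f X U Xf ell Vf T1 T2 kappa xs ut vs mus k ->
  forall j, (j <= k.+1)%N -> feasible f X U Xf (xs j) (ut j).
Proof.
move=> [feas_ut0 step]; elim=> [//|j IHj] ltjk.
have [opt_j [-> ->]] := step j ltjk.
apply: feasible_ushift => //; apply: feasible_usel opt_j _.
exact/IHj/ltnW.
Qed.

End ActiveSubspaceNMPC.

Theorem proposition1 (R : realType) (n m N q r : nat)
  (f : 'cV[R]_n -> 'cV[R]_m -> 'cV[R]_n)
  (X : set 'cV[R]_n) (U : set 'cV[R]_m) (Xf : set 'cV[R]_n)
  (Xini : set 'cV[R]_n)
  (ell : 'cV[R]_n -> 'cV[R]_m -> R) (Vf : 'cV[R]_n -> R)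
  (kappa : 'cV[R]_n -> 'cV[R]_m)
  (T1 : 'M[R]_(N * m, q)) (T2 : 'M[R]_(N * m, r))
  (* setting *)
  (HN : (0 < N)%N)
  (HX : closed X) (HX0 : (X°) 0) (HU : closed U) (HU0 : (U°) 0)
  (Hfcont : {within [set z | X z.1 /\ U z.2],
              continuous (fun z : 'cV[R]_n * 'cV[R]_m => f z.1 z.2)})
  (HfX : forall x u, X x -> U u -> X (f x u))
  (Hf00 : f 0 0 = 0)
  (Hellcont : {within [set z | X z.1 /\ U z.2],
              continuous (fun z : 'cV[R]_n * 'cV[R]_m => ell z.1 z.2)})
  (HVfcont : {within Xf, continuous Vf})
  (HXfX : Xf `<=` X)
  (Hini : compact Xini /\ (Xini°) 0 /\ Xini `<=` hatX0 N f X U Xf)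
  (* subspaces: T = [T1 T2] orthonormal *)
  (Hqr : (q + r = N * m)%N)
  (HT : (row_mx T1 T2)^T *m row_mx T1 T2 = 1%:M)
  (* Assumption 1 *)
  (HA1 : exists alpha : R -> R, K_infty alpha /\
           (forall x u, X x -> U u -> alpha (enorm x) <= ell x u) /\
           ell 0 0 = 0)
  (HA2 : (forall x, Xf x -> U (kappa x) /\ Xf (f x (kappa x)) /\
            Vf (f x (kappa x)) - Vf x <= - ell x (kappa x)) /\ Vf 0 = 0)
  (HA3 : exists beta : R -> R, K_infty beta /\
           forall x, Xini x ->
             (Vopt N f X U Xf ell Vf x <= (beta (enorm x))%:E)%E)
  (* a run of Algorithm 1 *)
  (x : nat -> 'cV[R]_n) (ut : nat -> 'cV[R]_(N * m))
  (vs : nat -> 'cV[R]_q) (mus : nat -> R) (k : nat)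
  (Hrun : alg1_run f X U Xf ell Vf T1 T2 kappa x ut vs mus k)
  (Hfeas : red_feasible f X U Xf T1 T2 (x k) (T2^T *m ut k)) :
  red_feasible f X U Xf T1 T2 (x k.+1) (T2^T *m ut k.+1).
Proof.
have [terminal_step _] := HA2.
have T_id := orthonormal_resolution_identity Hqr HT.
apply: red_feasible_of_feasible T_id _.
apply: (alg1_run_feasible_warm_start HN HXfX _ Hrun) => //.
by move=> y /terminal_step [? []].
Qed.
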